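(* Let $\mathcal{C}$ be a $(v,w,\lambda_a,\lambda_c)$-OOC with $|\mathcal{C}|\ge 2$. Then $\lambda_c\ge w^2/v$.
   Context: Let $v\ge 2$, $w\ge 1$, $\lambda_a,\lambda_c\ge 0$ be integers. A family $\mathcal{C}=\{X_0,\dots,X_{N-1}\}$ ($N\ge1$) of binary sequences of length $v$ and weight $w$ (number of ones) is a $(v,w,\lambda_a,\lambda_c)$-optical orthogonal code (OOC) if, writing $X=(x_t)_{t=0}^{v-1}$, $Y=(y_t)_{t=0}^{v-1}$ with indices mod $v$: (i) $\sum_{t=0}^{v-1}x_tx_{t+\delta}\le\lambda_a$ for every $X\in\mathcal{C}$ and $0<\delta\le v-1$; and (ii) $\sum_{t=0}^{v-1}x_ty_{t+\delta}\le\lambda_c$ for all distinct $X,Y\in\mathcal{C}$ and all $0\le\delta\le v-1$. *)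

From mathcomp Require Import all_boot all_order all_algebra.
Set Implicit Arguments. Unset Strict Implicit. Unset Printing Implicit Defensive.

(* A binary sequence of length v is a function 'I_v -> bool (as a finfun).
   Indices are taken mod v: x_{t+delta} is read at position (t + delta) %% v. *)
Definition binseq (v : nat) := {ffun 'I_v -> bool}.

Definition bat (v : nat) (X : binseq v) (t : nat) : nat :=
  match v as n return binseq n -> nat with
  | 0 => fun _ => 0
  | n.+1 => fun X => nat_of_bool (X (inord (t %% n.+1)))
  end X.

Definition weight (v : nat) (X : binseq v) : nat := \sum_(t < v) nat_of_bool (X t).

Definition corr (v : nat) (X Y : binseq v) (delta : nat) : nat :=
  \sum_(t < v) bat X t * bat Y (t + delta).

(* C = {X_0, ..., X_{N-1}} is a (v,w,la,lc)-OOC, N >= 1; the members are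
   pairwise distinct (it is a family/set of sequences). *)
Definition is_OOC (v w la lc N : nat) (C : 'I_N -> binseq v) : Prop :=
  2 <= v /\ 1 <= w /\ 1 <= N /\ injective C /\
      (forall i, weight (C i) = w) /\
      (forall i (delta : nat), 0 < delta <= v - 1 -> corr (C i) (C i) delta <= la) /\
      (forall i j, i != j -> forall delta : nat, delta <= v - 1 ->
         corr (C i) (C j) delta <= lc).

From mathcomp Require Import all_boot all_order all_algebra.
Import Order.TTheory GRing.Theory Num.Theory.

(* Summed over all v cyclic shifts, the cross-correlation of X and Y counts
   every pair (one of X, one of Y) exactly once, so it totals w * w.  For two
   distinct codewords each of the v terms is at most lc, whence w^2 <= v lc. *)

Lemma bat_ord n (X : binseq n.+1) (t : 'I_n.+1) : bat X t = X t.
Proof. by rewrite /bat modn_small // inord_val. Qed.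

Lemma sum_bat_shift n (Y : binseq n.+1) (t : nat) :
  \sum_(d < n.+1) bat Y (t + d) = weight Y.
Proof.
pose shift (d : 'I_n.+1) : 'I_n.+1 := inord ((t + d) %% n.+1).
have shift_inj : injective shift.
  move=> d1 d2 /(congr1 val); rewrite /= !inordK ?ltn_mod //.
  by move/eqP; rewrite eqn_modDl !modn_small // => /eqP/val_inj.
by rewrite /weight [RHS](reindex_inj shift_inj).
Qed.

Lemma sum_corr_shifts n (X Y : binseq n.+1) :
  \sum_(d < n.+1) corr X Y d = weight X * weight Y.
Proof.
rewrite /corr exchange_big {1}/weight big_distrl.
by apply: eq_bigr => t _; rewrite -big_distrr sum_bat_shift bat_ord.
Qed.

Lemma weight_mul_le_corr_bound n (X Y : binseq n.+1) (lc : nat) :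
  (forall d, d <= n -> corr X Y d <= lc) -> weight X * weight Y <= n.+1 * lc.
Proof.
move=> corr_le; rewrite -sum_corr_shifts -[k in k * lc]card_ord -sum_nat_const.
by apply: leq_sum => d _; apply: corr_le; rewrite -ltnS.
Qed.

Theorem proposition5p2 (v w la lc N : nat) (C : 'I_N -> binseq v) :
  @is_OOC v w la lc N C -> 2 <= N ->
  ((w ^ 2)%:R / v%:R <= lc%:R :> rat)%R.
Proof.
case: v C => [|n] C [v_ge2 [_ [_ [_ [weightC [_ crossC]]]]]] N_ge2 //.
pose i0 : 'I_N := Ordinal (ltnW N_ge2).
pose i1 : 'I_N := Ordinal N_ge2.
have w2_le : w ^ 2 <= n.+1 * lc.
  rewrite -mulnn -{1}(weightC i0) -(weightC i1).
  apply: weight_mul_le_corr_bound => d d_le_n.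
  by apply: (crossC i0 i1) => //; rewrite subn1.
by rewrite ler_pdivrMr ?ltr0n // mulrC -natrM ler_nat.
Qed.
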